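(* Let $\Lambda_{[n]}=\{\{1,2,\dots,n\}:n\in\mathbb N\}\subseteq\mathcal P_{fin}(\mathbb N)$ (where $\mathbb N=\{1,2,3,\dots\}$), let $I$ be a fine ideal of $\mathfrak F(\mathcal P_{fin}(\mathbb N),\mathbb R)$ containing $I_{0,\Lambda_{[n]}}$, and let $P$ be the probability of the NAP-space produced by $(\mathbb N,1,I)$ (constant weight $1$). If $A\subseteq\mathbb N$ and the limit $L=\lim_{n\to\infty}|A\cap\{1,\dots,n\}|/n$ exists (in the classical sense), then $P(A)-L$ is infinitesimal.
   Context: $\mathcal P_{fin}(\Omega)$ is the set of finite subsets of $\Omega$ and $\mathfrak F=\mathfrak F(\mathcal P_{fin}(\Omega),\mathbb R)$ the real algebra of functions $\mathcal P_{fin}(\Omega)\to\mathbb R$ with pointwise operations. For $\omega\in\Omega$, $\chi_\lambda(\omega)=1$ if $\omega\in\lambda$, else $0$. An ideal $I$ of $\mathfrak F$ is fine if it is maximal and $\lambda\mapsto 1-\chi_\lambda(\omega)$ lies in $I$ for every $\omega\in\Omega$. For $\Lambda\subseteq\mathcal P_{fin}(\Omega)$, $I_{0,\Lambda}=\{\varphi\in\mathfrak F:\varphi(\lambda)=0\text{ for all }\lambda\in\Lambda\}$. The NAP-space produced by $(\Omega,w,I)$ ($w:\Omega\to\mathbb R^+$, $I$ fine) has range field $\mathfrak F/I$, $J$ the canonical projection $\varphi\mapsto\varphi+I$, and $P(A)=J\big(\lambda\mapsto\sum_{\omega\in A\cap\lambda}w(\omega)\big)/J\big(\lambda\mapsto\sum_{\omega\in\lambda}w(\omega)\big)$.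 An element $x$ of this ordered field is infinitesimal if $|x|<1/n$ for all $n\in\mathbb N$. *)

From Stdlib Require Import Reals List Arith Classical ClassicalEpsilon.
Open Scope R_scope.

(* Omega = N = {1,2,3,...}, represented by natural numbers >= 1.
   A finite subset of Omega is represented canonically by the strictly
   increasing list of its elements (all >= 1). *)
Fixpoint incr_from (prev : nat) (l : list nat) : bool :=
  match l with
  | nil => true
  | x :: t => Nat.ltb prev x && incr_from x t
  end.

(* P_fin(N) : strictly increasing lists of positive naturals (boolean proof,
   so equality of subsets is equality of lists). *)
Definition Pfin : Type := { l : list nat | incr_from 0 l = true }.

Definition elems (lam : Pfin) : list nat := proj1_sig lam.

Definition Falg : Type := Pfin -> R.

Definition chi (lam : Pfin) (w : nat) : R :=
  if existsb (Nat.eqb w) (elems lam) then 1 else 0.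

Definition is_ideal (I : Falg -> Prop) : Prop :=
  I (fun _ => 0) /\
  (forall f g, I f -> I g -> I (fun l => f l + g l)) /\
  (forall f g, I f -> I (fun l => g l * f l)).

Definition is_maximal_ideal (I : Falg -> Prop) : Prop :=
  is_ideal I /\ ~ I (fun _ => 1) /\
  (forall J : Falg -> Prop, is_ideal J -> (forall f, I f -> J f) ->
     (forall f, J f -> I f) \/ (forall f, J f)).

Definition is_fine (I : Falg -> Prop) : Prop :=
  is_maximal_ideal I /\
  (forall w : nat, (1 <= w)%nat -> I (fun l => 1 - chi l w)).

Definition in_Lambda_n (lam : Pfin) : Prop :=
  exists n : nat, (1 <= n)%nat /\ elems lam = seq 1 n.

Definition I0_Lambda_n (f : Falg) : Prop :=
  forall lam, in_Lambda_n lam -> f lam = 0.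

Definition indic (A : nat -> Prop) (k : nat) : R :=
  if excluded_middle_informative (A k) then 1 else 0.

Definition weightA (A : nat -> Prop) (lam : Pfin) : R :=
  fold_right (fun k acc => indic A k + acc) 0 (elems lam).

Definition weightAll (lam : Pfin) : R := INR (length (elems lam)).

(* The quotient field F/I, accessed through representatives:
   J(f) = J(g)  iff  f - g in I;
   J(f) <= J(g) iff  f <= g + h pointwise for some h in I
   (the order induced on F/I by the pointwise order of F). *)
Definition qeq (I : Falg -> Prop) (f g : Falg) : Prop :=
  I (fun l => f l - g l).
Definition qle (I : Falg -> Prop) (f g : Falg) : Prop :=
  exists h, I h /\ forall l, f l <= g l + h l.
Definition qlt (I : Falg -> Prop) (f g : Falg) : Prop :=
  qle I f g /\ ~ qeq I f g.

(* J(f) is infinitesimal: |J f| < 1/n for all n in N, i.e.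
   -1/n < J f < 1/n, reals embedded as constant functions. *)
Definition infinitesimal (I : Falg -> Prop) (f : Falg) : Prop :=
  forall n : nat, (1 <= n)%nat ->
    qlt I (fun _ => - / INR n) f /\ qlt I f (fun _ => / INR n).

(* rho represents P(A) = J(weightA A) / J(weightAll) in F/I,
   i.e. J(rho) * J(weightAll) = J(weightA A). *)
Definition represents_P (I : Falg -> Prop) (A : nat -> Prop) (rho : Falg) : Prop :=
  qeq I (fun l => rho l * weightAll l) (weightA A).

Definition countA (A : nat -> Prop) (n : nat) : R :=
  fold_right (fun k acc => indic A k + acc) 0 (seq 1 n).

(* The proof rests on one observation: a fine ideal I that
   contains I_{0,Lambda_[n]} "only sees" the tail {1..m}, m >= M, of the
   sequence Lambda_[n], for every M.  Precisely:
   - a function vanishing on all {1..m} with m >= M lies in I (multiply by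
     chi(M+1), which kills the initial segments, and use fineness for the rest);
   - hence pointwise inequalities that hold on such a tail (up to an element
     of I) give inequalities in F/I, and an element of I cannot be nonzero on a
     whole tail, since it would then be invertible modulo I.
   From this, freq A represents P(A); any representative rho agrees with
   freq A modulo I; and on the tail freq A {1..m} = |A cap {1..m}|/m is within
   1/n of L for m large, which yields -1/n < P(A) - L < 1/n strictly in F/I. *)
From Stdlib Require Import Reals List Arith Classical ClassicalEpsilon.
From Stdlib Require Import Lra Lia FunctionalExtensionality.
Open Scope R_scope.

Definition freq (A : nat -> Prop) (lam : Pfin) : R := weightA A lam / weightAll lam.

Definition in_tail (M : nat) (lam : Pfin) : Prop :=
  exists m, (M <= m)%nat /\ elems lam = seq 1 m.

Definition on_tail (M : nat) (P : Pfin -> Prop) : Prop :=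
  forall lam, in_tail M lam -> P lam.

Lemma freq_on_segment (A : nat -> Prop) (lam : Pfin) (m : nat) :
  elems lam = seq 1 m -> freq A lam = countA A m / INR m.
Proof.
  intros Hl. unfold freq, weightA, weightAll, countA.
  now rewrite Hl, length_seq.
Qed.

Lemma density_eventually_close (A : nat -> Prop) (L eps : R) :
  Un_cv (fun n => countA A (S n) / INR (S n)) L -> 0 < eps ->
  exists M, forall m, (M <= m)%nat -> Rabs (countA A m / INR m - L) < eps.
Proof.
  intros HL Heps. destruct (HL eps Heps) as [N HN].
  exists (S N). intros [|k] Hk; [lia|].
  apply (HN k). lia.
Qed.

Lemma chi_segment_beyond (lam : Pfin) (m w : nat) :
  elems lam = seq 1 m -> (m < w)%nat -> chi lam w = 0.
Proof.
  intros Hl Hw. unfold chi; rewrite Hl.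
  destruct (existsb (Nat.eqb w) (seq 1 m)) eqn:E; [|reflexivity].
  apply existsb_exists in E. destruct E as [x [Hin Heq]].
  apply Nat.eqb_eq in Heq; subst. apply in_seq in Hin. lia.
Qed.

Section TailIdeal.

Variable I : Falg -> Prop.
Hypothesis HI : is_fine I.
Hypothesis Hsub : forall f, I0_Lambda_n f -> I f.

Lemma ideal_ext (f g : Falg) : I f -> (forall l, f l = g l) -> I g.
Proof.
  intros Hf E. replace g with f; [exact Hf|].
  now apply functional_extensionality.
Qed.

Lemma ideal_add (f g : Falg) : I f -> I g -> I (fun l => f l + g l).
Proof. destruct HI as [[[_ [Iadd _]] _] _]. apply Iadd. Qed.

Lemma ideal_mul (g f : Falg) : I f -> I (fun l => g l * f l).
Proof. destruct HI as [[[_ [_ Imul]] _] _]. apply Imul. Qed.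

Lemma ideal_opp (f : Falg) : I f -> I (fun l => - f l).
Proof.
  intros Hf. apply (ideal_ext _ _ (ideal_mul (fun _ => -1) f Hf)).
  intros l; ring.
Qed.

(* Split
   f = f (1 - chi(M+1)) + f chi(M+1): the first term is in I by fineness, the
   second vanishes on every {1..m} (for m <= M because chi(M+1) does). *)
Lemma vanishing_on_tail_in_ideal (M : nat) (f : Falg) :
  on_tail M (fun lam => f lam = 0) -> I f.
Proof.
  intros Hf. destruct HI as [_ Hfine].
  pose proof (ideal_mul f _ (Hfine (S M) ltac:(lia))) as Hfar.
  assert (Hnear : I (fun l => f l * chi l (S M))).
  { apply Hsub. intros lam [m [_ Hl]]. destruct (le_lt_dec M m) as [HMm|HmM].
    - rewrite (Hf lam (ex_intro _ m (conj HMm Hl))); ring.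
    - rewrite (chi_segment_beyond lam m (S M) Hl); [ring|lia]. }
  apply (ideal_ext _ _ (ideal_add _ _ Hfar Hnear)). intros l; ring.
Qed.

Lemma ideal_tail_congr (M : nat) (f g : Falg) :
  I f -> on_tail M (fun lam => f lam = g lam) -> I g.
Proof.
  intros Hf Hfg.
  assert (Hdiff : I (fun l => g l - f l)).
  { apply (vanishing_on_tail_in_ideal M). intros lam Hlam.
    rewrite (Hfg lam Hlam); ring. }
  apply (ideal_ext _ _ (ideal_add _ _ Hdiff Hf)). intros l; ring.
Qed.

(* An element of I cannot be nonzero along a whole tail: it would be a unit
   modulo I, contradicting the maximality (properness) of I. *)
Lemma ideal_not_nonzero_on_tail (M : nat) (u : Falg) :
  I u -> on_tail M (fun lam => u lam <> 0) -> False.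
Proof.
  intros Hu Hne. destruct HI as [[_ [Hproper _]] _]. apply Hproper.
  set (v := fun l => if excluded_middle_informative (in_tail M l) then / u l else 0).
  apply (ideal_tail_congr M _ _ (ideal_mul v u Hu)).
  intros lam Hlam. unfold v.
  destruct excluded_middle_informative as [_|Hnot]; [|contradiction].
  field. exact (Hne lam Hlam).
Qed.

Lemma qlt_of_tail (M : nat) (f g e : Falg) :
  I e -> on_tail M (fun lam => f lam + e lam < g lam) -> qlt I f g.
Proof.
  intros He Hlt. split.
  - set (h := fun l => if excluded_middle_informative (in_tail M l)
                       then - e l else Rabs (f l - g l)).
    exists h. split.
    + apply (ideal_tail_congr M _ _ (ideal_opp e He)). intros lam Hlam.
      unfold h. destruct excluded_middle_informative; [reflexivity|contradiction].
    + intros l. unfold h. destruct excluded_middle_informative as [Hl|_].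
      * pose proof (Hlt l Hl); lra.
      * pose proof (Rle_abs (f l - g l)); lra.
  - unfold qeq. intros Hfg.
    apply (ideal_not_nonzero_on_tail M _ (ideal_add _ _ Hfg He)).
    intros lam Hlam. pose proof (Hlt lam Hlam). lra.
Qed.

Lemma representative_minus_freq (A : nat -> Prop) (rho : Falg) :
  represents_P I A rho -> I (fun l => rho l - freq A l).
Proof.
  intros Hr. unfold represents_P, qeq in Hr.
  apply (ideal_tail_congr 1 _ _ (ideal_mul (fun l => / weightAll l) _ Hr)).
  intros lam [m [Hm Hl]].
  assert (Hw : weightAll lam = INR m) by (unfold weightAll; rewrite Hl, length_seq; reflexivity).
  assert (Hm0 : INR m <> 0) by (apply not_0_INR; lia).
  unfold freq. rewrite Hw. field. exact Hm0.
Qed.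

End TailIdeal.

Lemma freq_represents_P (I : Falg -> Prop) (A : nat -> Prop) :
  is_ideal I -> represents_P I A (freq A).
Proof.
  intros [I0 _]. unfold represents_P, qeq.
  replace (fun l => freq A l * weightAll l - weightA A l) with (fun _ : Pfin => 0);
    [exact I0|].
  apply functional_extensionality. intros l.
  unfold freq, weightA, weightAll. destruct (elems l) as [|k l0].
  - simpl. unfold Rdiv. ring.
  - assert (INR (length (k :: l0)) <> 0) by (apply not_0_INR; simpl; lia).
    field. assumption.
Qed.

Theorem mainTheorem12 (I : Falg -> Prop)
  (HI : is_fine I)
  (Hsub : forall f, I0_Lambda_n f -> I f)
  (A : nat -> Prop) (L : R)
  (HL : Un_cv (fun n => countA A (S n) / INR (S n)) L) :
  (exists rho, represents_P I A rho) /\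
  (forall rho, represents_P I A rho -> infinitesimal I (fun l => rho l - L)).
Proof.
  split.
  { exists (freq A). apply freq_represents_P. apply HI. }
  intros rho Hr n Hn.
  pose proof (representative_minus_freq I HI Hsub A rho Hr) as Hdiff.
  assert (Heps : 0 < / INR n) by (apply Rinv_0_lt_compat, lt_0_INR; lia).
  destruct (density_eventually_close A L _ HL Heps) as [M HM].
  assert (Hclose : on_tail M (fun lam => Rabs (freq A lam - L) < / INR n)).
  { intros lam [m [Hm Hl]]. rewrite (freq_on_segment A lam m Hl). exact (HM m Hm). }
  split.
  - apply (qlt_of_tail I HI Hsub M _ _ _ Hdiff).
    intros lam Hlam. pose proof (Rabs_def2 _ _ (Hclose lam Hlam)). lra.
  - apply (qlt_of_tail I HI Hsub M _ _ _ (ideal_opp I HI _ Hdiff)).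
    intros lam Hlam. pose proof (Rabs_def2 _ _ (Hclose lam Hlam)). lra.
Qed.
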